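(* Let $\langle X,d\rangle$ be a metric space. The following are equivalent: (1) $X$ is cofinally Bourbaki quasi-complete; (2) every continuous function $f$ from $X$ to any metric space $\langle Y,\rho\rangle$ maps every cofinally Bourbaki quasi-Cauchy sequence in $X$ to a sequence in $Y$ that has a Cauchy subsequence; (3) every continuous function from $X$ to any metric space $\langle Y,\rho\rangle$ maps every cofinally Bourbaki quasi-Cauchy sequence in $X$ to a cofinally Cauchy sequence in $Y$; (4) every continuous function from $X$ to any metric space $\langle Y,\rho\rangle$ maps every cofinally Bourbaki quasi-Cauchy sequence in $X$ to a cofinally Bourbaki-Cauchy sequence in $Y$; (5) every real-valued continuous function on $X$ maps every cofinally Bourbaki quasi-Cauchy sequence in $X$ to a cofinally Bourbaki-Cauchy sequence in $\mathbb{R}$.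
   Context: For $\varepsilon>0$, an $\varepsilon$-chain joining $x,y$ is a finite sequence $x=x_0,\dots,x_n=y$ with $d(x_{i-1},x_i)<\varepsilon$. A sequence $\langle x_n\rangle$ in $X$ is cofinally Bourbaki quasi-Cauchy if for every $\varepsilon>0$ there is an infinite $N_\varepsilon\subseteq\mathbb{N}$ such that any $x_j,x_k$ with $j,k\in N_\varepsilon$ can be joined by an $\varepsilon$-chain; $X$ is cofinally Bourbaki quasi-complete if every such sequence has a cluster point. A sequence $\langle y_n\rangle$ in $\langle Y,\rho\rangle$ is cofinally Cauchy if for every $\varepsilon>0$ there is an infinite $N_\varepsilon\subseteq\mathbb{N}$ with $\rho(y_n,y_m)<\varepsilon$ for all $n,m\in N_\varepsilon$. Let $S^1_\rho(p,\varepsilon)$ be the open $\varepsilon$-ball about $p$ and $S^{m}_\rho(p,\varepsilon)=\{y:\rho(y,S^{m-1}_\rho(p,\varepsilon))<\varepsilon\}$; $\langle y_n\rangle$ is cofinally Bourbaki-Cauchy if for every $\varepsilon>0$ there exist an infinite $N_\varepsilon\subseteq\mathbb{N}$, $m\in\mathbb{N}$, $p\in Y$ with $y_n\in S^m_\rho(p,\varepsilon)$ for all $n\in N_\varepsilon$. *)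

From Stdlib Require Import Reals Lra Arith.
Open Scope R_scope.

Record MetricSpace := {
  carrier :> Type;
  dist : carrier -> carrier -> R;
  dist_nonneg : forall x y, 0 <= dist x y;
  dist_eq0 : forall x y, dist x y = 0 <-> x = y;
  dist_sym : forall x y, dist x y = dist y x;
  dist_tri : forall x y z, dist x z <= dist x y + dist y z
}.

Arguments dist {m} _ _.

Definition R_dist_nonneg (x y : R) : 0 <= Rabs (x - y) := Rabs_pos _.
Lemma R_dist_eq0 (x y : R) : Rabs (x - y) = 0 <-> x = y.
Proof.
  split; intro H.
  - destruct (Rcase_abs (x - y)); [rewrite Rabs_left in H by lra | rewrite Rabs_right in H by lra]; lra.
  - subst; replace (y - y) with 0 by ring; apply Rabs_R0.
Qed.
Lemma R_dist_sym (x y : R) : Rabs (x - y) = Rabs (y - x).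
Proof. apply Rabs_minus_sym. Qed.
Lemma R_dist_tri (x y z : R) : Rabs (x - z) <= Rabs (x - y) + Rabs (y - z).
Proof. replace (x - z) with ((x - y) + (y - z)) by ring. apply Rabs_triang. Qed.

Definition R_metric : MetricSpace :=
  {| carrier := R; dist := fun x y => Rabs (x - y);
     dist_nonneg := R_dist_nonneg; dist_eq0 := R_dist_eq0;
     dist_sym := R_dist_sym; dist_tri := R_dist_tri |}.

Definition infinite_nat (N : nat -> Prop) : Prop :=
  forall n0 : nat, exists n, (n0 <= n)%nat /\ N n.

Definition eps_chain {X : MetricSpace} (eps : R) (x y : X) : Prop :=
  exists (n : nat) (c : nat -> X),
    c 0%nat = x /\ c n = y /\ (forall i, (i < n)%nat -> dist (c i) (c (S i)) < eps).

Definition cofinally_Bourbaki_quasi_Cauchy {X : MetricSpace} (x : nat -> X) : Prop :=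
  forall eps, 0 < eps ->
    exists N : nat -> Prop, infinite_nat N /\
      forall j k, N j -> N k -> eps_chain eps (x j) (x k).

Definition cluster_point {X : MetricSpace} (x : nat -> X) (p : X) : Prop :=
  forall eps, 0 < eps -> forall n0 : nat, exists n, (n0 <= n)%nat /\ dist (x n) p < eps.

Definition cofinally_Bourbaki_quasi_complete (X : MetricSpace) : Prop :=
  forall x : nat -> X, cofinally_Bourbaki_quasi_Cauchy x -> exists p, cluster_point x p.

Definition continuous_map {X Y : MetricSpace} (f : X -> Y) : Prop :=
  forall x eps, 0 < eps -> exists delta, 0 < delta /\
    forall x', dist x x' < delta -> dist (f x) (f x') < eps.

Definition cauchy_seq {Y : MetricSpace} (y : nat -> Y) : Prop :=
  forall eps, 0 < eps -> exists n0 : nat,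
    forall n m, (n0 <= n)%nat -> (n0 <= m)%nat -> dist (y n) (y m) < eps.

Definition has_cauchy_subseq {Y : MetricSpace} (y : nat -> Y) : Prop :=
  exists phi : nat -> nat, (forall n, (phi n < phi (S n))%nat) /\
    cauchy_seq (fun n => y (phi n)).

Definition cofinally_Cauchy {Y : MetricSpace} (y : nat -> Y) : Prop :=
  forall eps, 0 < eps ->
    exists N : nat -> Prop, infinite_nat N /\
      forall n m, N n -> N m -> dist (y n) (y m) < eps.

(* S_iter p eps k = S^{k+1}_rho(p, eps):
   S^1 = open eps-ball about p,
   S^{m+1} = { y | rho(y, S^m) < eps } = { y | exists z in S^m, rho(y,z) < eps }. *)
Fixpoint S_iter {Y : MetricSpace} (p : Y) (eps : R) (k : nat) : Y -> Prop :=
  match k with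
  | 0%nat => fun y => dist p y < eps
  | S k' => fun y => exists z, S_iter p eps k' z /\ dist y z < eps
  end.

Definition S_m {Y : MetricSpace} (m : nat) (p : Y) (eps : R) : Y -> Prop :=
  S_iter p eps (m - 1).

Definition cofinally_Bourbaki_Cauchy {Y : MetricSpace} (y : nat -> Y) : Prop :=
  forall eps, 0 < eps ->
    exists (N : nat -> Prop) (m : nat) (p : Y),
      infinite_nat N /\ (1 <= m)%nat /\ forall n, N n -> S_m m p eps (y n).

(** For (1) => (2) => (3) => (4) => (5) nothing about the sequence matters: a
    continuous map sends a cluster point of [x] to a cluster point of [f o x], a sequence with a
    cluster point has a Cauchy subsequence, and a Cauchy subsequence gives a cofinally Cauchy and
    hence cofinally Bourbaki-Cauchy sequence.

    For (5) => (1), let [x] have no cluster point. Then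
    [g z = inf_n (d(z, x n) + 1/(n+1))] is positive and 1-Lipschitz, so [1/g] is a continuous
    real function with [1/g (x n) >= n+1]. But the iterated ball [S^m(p, eps)] lies in the ball
    of radius [m eps] about [p], so a cofinally Bourbaki-Cauchy real sequence is bounded along
    an infinite set of indices; hence [1/g o x] is not cofinally Bourbaki-Cauchy and (5) fails
    for [x]. *)

From Stdlib Require Import Reals Lra Lia Classical ClassicalEpsilon.
Open Scope R_scope.

Lemma inv_INR_S_pos (n : nat) : 0 < / INR (S n).
Proof. apply Rinv_0_lt_compat, lt_0_INR; lia. Qed.

Lemma inv_INR_S_eventually_lt (eps : R) :
  0 < eps -> exists n0 : nat, forall k, (n0 <= k)%nat -> / INR (S k) < eps.
Proof.
  intros Heps. destruct (INR_unbounded (/ eps)) as [n0 Hn0].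
  exists n0; intros k Hk.
  assert (INR n0 <= INR (S k)) by (apply le_INR; lia).
  rewrite <- (Rinv_inv eps). apply Rinv_lt_contravar; [|lra].
  apply Rmult_lt_0_compat; [apply Rinv_0_lt_compat; lra | apply lt_0_INR; lia].
Qed.

Lemma glb_le (u : nat -> R) (pr : has_lb u) (n : nat) : glb u pr <= u n.
Proof.
  unfold glb. destruct (lb_to_glb u pr) as [l [Hub _]].
  assert (- u n <= l) by (apply Hub; exists n; reflexivity). lra.
Qed.

Lemma glb_ge (u : nat -> R) (pr : has_lb u) (c : R) :
  (forall n, c <= u n) -> c <= glb u pr.
Proof.
  intros Hc. unfold glb. destruct (lb_to_glb u pr) as [l [_ Hleast]].
  enough (l <= - c) by lra.
  apply Hleast. intros r [n ->]. unfold opp_seq. specialize (Hc n). lra.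
Qed.

Lemma cluster_point_continuous_map {X Y : MetricSpace} (f : X -> Y) (x : nat -> X) (p : X) :
  continuous_map f -> cluster_point x p -> cluster_point (fun n => f (x n)) (f p).
Proof.
  intros Hf Hp eps Heps n0.
  destruct (Hf p eps Heps) as [delta [Hdelta Hclose]].
  destruct (Hp delta Hdelta n0) as [n [Hn Hxn]].
  exists n; split; [exact Hn|].
  rewrite dist_sym. apply Hclose. rewrite dist_sym. exact Hxn.
Qed.

Fixpoint greedy_subseq (g : nat -> nat -> nat) (k : nat) : nat :=
  match k with
  | O => g O O
  | S k' => g k (S (greedy_subseq g k'))
  end.

Lemma cluster_point_has_cauchy_subseq {Y : MetricSpace} (y : nat -> Y) (q : Y) :
  cluster_point y q -> has_cauchy_subseq y.
Proof.
  intros Hq.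
  destruct (choice (fun kn0 n => (snd kn0 <= n)%nat /\ dist (y n) q < / INR (S (fst kn0))))
    as [g Hg].
  { intros [k n0]. apply Hq, inv_INR_S_pos. }
  set (phi := greedy_subseq (fun k n0 => g (k, n0))).
  assert (Hclose : forall k, dist (y (phi k)) q < / INR (S k))
    by (intros [|k]; apply (Hg (_, _))).
  exists phi; split.
  - intros k. apply (Hg (S k, S (phi k))).
  - intros eps Heps.
    destruct (inv_INR_S_eventually_lt (eps / 2)) as [n0 Hn0]; [lra|].
    exists n0; intros n m Hn Hm.
    pose proof (Hclose n); pose proof (Hclose m); pose proof (Hn0 n Hn); pose proof (Hn0 m Hm).
    pose proof (dist_tri Y (y (phi n)) q (y (phi m))).
    rewrite (dist_sym _ q (y (phi m))) in *. lra.
Qed.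

Lemma has_cauchy_subseq_cofinally_Cauchy {Y : MetricSpace} (y : nat -> Y) :
  has_cauchy_subseq y -> cofinally_Cauchy y.
Proof.
  intros [phi [Hphi Hcauchy]] eps Heps.
  destruct (Hcauchy eps Heps) as [n0 Hn0].
  assert (Hge : forall i, (i <= phi i)%nat)
    by (induction i; [lia | specialize (Hphi i); lia]).
  exists (fun k => exists i, (n0 <= i)%nat /\ k = phi i). split.
  - intros k0. exists (phi (Nat.max n0 k0)). split.
    + specialize (Hge (Nat.max n0 k0)); lia.
    + exists (Nat.max n0 k0); split; [lia | reflexivity].
  - intros n m [i [Hi ->]] [j [Hj ->]]. apply Hn0; assumption.
Qed.

Lemma cofinally_Cauchy_cofinally_Bourbaki_Cauchy {Y : MetricSpace} (y : nat -> Y) :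
  cofinally_Cauchy y -> cofinally_Bourbaki_Cauchy y.
Proof.
  intros Hy eps Heps. destruct (Hy eps Heps) as [N [HN Hclose]].
  destruct (HN 0%nat) as [n1 [_ Hn1]].
  exists N, 1%nat, (y n1). split; [exact HN | split; [lia|]].
  intros n Hn. apply Hclose; assumption.
Qed.

Lemma S_iter_dist_lt {Y : MetricSpace} (p : Y) (eps : R) (k : nat) (y : Y) :
  S_iter p eps k y -> dist p y < INR (S k) * eps.
Proof.
  revert y; induction k as [|k IH]; intros y Hy.
  - simpl in *. lra.
  - destruct Hy as [z [Hz Hyz]].
    pose proof (IH z Hz). pose proof (dist_tri Y p z y).
    rewrite (dist_sym _ y z) in Hyz. rewrite S_INR. lra.
Qed.

Lemma cofinally_Bourbaki_Cauchy_bounded {Y : MetricSpace} (y : nat -> Y) :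
  cofinally_Bourbaki_Cauchy y ->
  exists (N : nat -> Prop) (p : Y) (r : R), infinite_nat N /\ forall n, N n -> dist p (y n) < r.
Proof.
  intros Hy. destruct (Hy 1 Rlt_0_1) as [N [m [p [HN [_ Hin]]]]].
  exists N, p, (INR (S (m - 1)) * 1). split; [exact HN|].
  intros n Hn. apply S_iter_dist_lt, Hin, Hn.
Qed.

Lemma not_cofinally_Bourbaki_Cauchy_ge_index (y : nat -> R_metric) :
  (forall n, INR n <= y n) -> ~ cofinally_Bourbaki_Cauchy y.
Proof.
  intros Hge Hy.
  destruct (cofinally_Bourbaki_Cauchy_bounded y Hy) as [N [p [r [HN Hr]]]].
  destruct (INR_unbounded (Rabs p + r)) as [n0 Hn0].
  destruct (HN n0) as [n [Hn HNn]].
  specialize (Hr n HNn); specialize (Hge n); simpl in *.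
  assert (INR n0 <= INR n) by (apply le_INR; exact Hn).
  pose proof (Rle_abs p). pose proof (Rle_abs (y n - p)).
  rewrite Rabs_minus_sym in Hr. lra.
Qed.

Lemma continuous_map_of_lipschitz {X : MetricSpace} (g : X -> R_metric) :
  (forall z w, g z <= dist z w + g w) -> continuous_map g.
Proof.
  intros Hlip z eps Heps. exists eps; split; [exact Heps|].
  intros w Hw. pose proof (Hlip z w). pose proof (Hlip w z).
  rewrite (dist_sym _ w z) in *. simpl. apply Rabs_def1; lra.
Qed.

Lemma continuous_map_inv {X : MetricSpace} (g : X -> R_metric) :
  continuous_map g -> (forall z, 0 < g z) -> continuous_map (Y := R_metric) (fun z => / g z).
Proof.
  intros Hg Hpos z eps Heps.
  set (a := g z). assert (Ha : 0 < a) by apply Hpos.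
  destruct (Hg z (Rmin (a / 2) (eps * a * a / 2))) as [delta [Hdelta Hclose]].
  { apply Rmin_glb_lt; [lra|]. apply Rmult_lt_0_compat; [|lra].
    apply Rmult_lt_0_compat; [apply Rmult_lt_0_compat|]; lra. }
  exists delta; split; [exact Hdelta|].
  intros w Hw. specialize (Hclose w Hw). simpl in *. fold a in Hclose.
  set (b := g w) in *.
  pose proof (Rmin_l (a / 2) (eps * a * a / 2)). pose proof (Rmin_r (a / 2) (eps * a * a / 2)).
  apply Rabs_def2 in Hclose as [Hlo Hhi].
  assert (Hb : a / 2 < b) by lra.
  assert (Hdiff : Rabs (b - a) < eps * (a * b)) by (apply Rabs_def1; nra).
  replace (/ a - / b) with ((b - a) / (a * b)) by (field; lra).
  unfold Rdiv; rewrite Rabs_mult, Rabs_inv, (Rabs_right (a * b)) by nra.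
  apply (Rmult_lt_reg_r (a * b)); [nra|].
  field_simplify; lra.
Qed.

Section WeightedDistanceToSequence.

Variables (X : MetricSpace) (x : nat -> X).

Definition weighted_dists (z : X) (n : nat) : R := dist z (x n) + / INR (S n).

Lemma weighted_dists_has_lb (z : X) : has_lb (weighted_dists z).
Proof.
  exists 0. intros r [n ->]. unfold opp_seq, weighted_dists.
  pose proof (dist_nonneg X z (x n)). pose proof (inv_INR_S_pos n). lra.
Qed.

Definition weighted_gap (z : X) : R := glb (weighted_dists z) (weighted_dists_has_lb z).

Lemma weighted_gap_le (z : X) (n : nat) : weighted_gap z <= dist z (x n) + / INR (S n).
Proof. exact (glb_le _ _ n). Qed.

Lemma weighted_gap_lipschitz (z w : X) : weighted_gap z <= dist z w + weighted_gap w.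
Proof.
  enough (weighted_gap z - dist z w <= weighted_gap w) by lra.
  apply glb_ge. intros n. unfold weighted_dists.
  pose proof (weighted_gap_le z n). pose proof (dist_tri X z w (x n)). lra.
Qed.

Lemma weighted_gap_pos (z : X) : ~ cluster_point x z -> 0 < weighted_gap z.
Proof.
  intros Hz. unfold cluster_point in Hz.
  apply not_all_ex_not in Hz as [eps Hz]. apply imply_to_and in Hz as [Heps Hz].
  apply not_all_ex_not in Hz as [n0 Hfar].
  assert (Hmin : 0 < Rmin eps (/ INR (S n0)))
    by (apply Rmin_glb_lt; [lra | apply inv_INR_S_pos]).
  apply (Rlt_le_trans _ _ _ Hmin), glb_ge. intros n. unfold weighted_dists.
  pose proof (dist_nonneg X z (x n)). pose proof (inv_INR_S_pos n).
  destruct (Nat.le_gt_cases n0 n) as [Hle | Hlt].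
  - assert (eps <= dist z (x n)).
    { rewrite dist_sym. apply Rnot_lt_le. intros Hn. apply Hfar. exists n; split; assumption. }
    pose proof (Rmin_l eps (/ INR (S n0))). lra.
  - assert (/ INR (S n0) <= / INR (S n))
      by (apply Rinv_le_contravar; [apply lt_0_INR | apply le_INR]; lia).
    pose proof (Rmin_r eps (/ INR (S n0))). lra.
Qed.

Lemma no_cluster_point_unbounded_continuous_map :
  (forall p, ~ cluster_point x p) ->
  exists f : X -> R_metric, continuous_map f /\ forall n, INR n <= f (x n).
Proof.
  intros Hnone.
  exists (fun z => / weighted_gap z). split.
  - apply continuous_map_inv.
    + apply continuous_map_of_lipschitz, weighted_gap_lipschitz.
    + intros z. apply weighted_gap_pos, Hnone.
  - intros n. simpl.
    assert (Hdist0 : dist (x n) (x n) = 0) by (apply dist_eq0; reflexivity).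
    pose proof (weighted_gap_le (x n) n) as Hle. rewrite Hdist0, Rplus_0_l in Hle.
    apply Rle_trans with (INR (S n)); [apply le_INR; lia|].
    rewrite <- (Rinv_inv (INR (S n))).
    apply Rinv_le_contravar; [apply weighted_gap_pos, Hnone | exact Hle].
Qed.

End WeightedDistanceToSequence.

Lemma cofinally_Bourbaki_quasi_complete_of_real_maps (X : MetricSpace) :
  (forall f : X -> R_metric, continuous_map f ->
     forall x : nat -> X, cofinally_Bourbaki_quasi_Cauchy x ->
       cofinally_Bourbaki_Cauchy (Y := R_metric) (fun n => f (x n))) ->
  cofinally_Bourbaki_quasi_complete X.
Proof.
  intros Hreal x Hx. apply NNPP; intros Hnone.
  destruct (no_cluster_point_unbounded_continuous_map X x) as [f [Hf Hge]].
  { intros p Hp. apply Hnone. exists p; exact Hp. }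
  exact (not_cofinally_Bourbaki_Cauchy_ge_index _ Hge (Hreal f Hf x Hx)).
Qed.

Theorem mainTheorem7 (X : MetricSpace) :
  let P1 := cofinally_Bourbaki_quasi_complete X in
  let P2 := forall (Y : MetricSpace) (f : X -> Y), continuous_map f ->
              forall x : nat -> X, cofinally_Bourbaki_quasi_Cauchy x ->
                has_cauchy_subseq (fun n => f (x n)) in
  let P3 := forall (Y : MetricSpace) (f : X -> Y), continuous_map f ->
              forall x : nat -> X, cofinally_Bourbaki_quasi_Cauchy x ->
                cofinally_Cauchy (fun n => f (x n)) in
  let P4 := forall (Y : MetricSpace) (f : X -> Y), continuous_map f ->
              forall x : nat -> X, cofinally_Bourbaki_quasi_Cauchy x ->
                cofinally_Bourbaki_Cauchy (fun n => f (x n)) in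
  let P5 := forall f : X -> R_metric, continuous_map f ->
              forall x : nat -> X, cofinally_Bourbaki_quasi_Cauchy x ->
                cofinally_Bourbaki_Cauchy (Y := R_metric) (fun n => f (x n)) in
  (P1 <-> P2) /\ (P1 <-> P3) /\ (P1 <-> P4) /\ (P1 <-> P5).
Proof.
  intros P1 P2 P3 P4 P5.
  assert (H12 : P1 -> P2).
  { intros H1 Y f Hf x Hx. destruct (H1 x Hx) as [p Hp].
    exact (cluster_point_has_cauchy_subseq _ _ (cluster_point_continuous_map f x p Hf Hp)). }
  assert (H23 : P2 -> P3)
    by (intros H2 Y f Hf x Hx; apply has_cauchy_subseq_cofinally_Cauchy, H2; assumption).
  assert (H34 : P3 -> P4)
    by (intros H3 Y f Hf x Hx; apply cofinally_Cauchy_cofinally_Bourbaki_Cauchy, H3; assumption).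
  assert (H45 : P4 -> P5) by (intros H4 f Hf; apply H4, Hf).
  assert (H51 : P5 -> P1) by apply cofinally_Bourbaki_quasi_complete_of_real_maps.
  tauto.
Qed.
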